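(* If $C$ is a semiprime $k$-coalgebra with finite coradical filtration (i.e. $C=C_n$ for some $n$), then $C$ is cosemisimple (i.e. $C=\mathrm{Soc}\,C=C_0$). *)

(* MathComp has no tensor
   product, so elements of C (x) C are represented by finite formal sums
   (seq (C * C)) of simple tensors, and (in)equalities / memberships in tensor
   products are expressed through their universal property: by quantifying
   over all bilinear (resp. trilinear) maps into all k-modules M. *)
From HB Require Import structures.
From mathcomp Require Import all_boot all_order all_algebra.
Set Implicit Arguments. Unset Strict Implicit. Unset Printing Implicit Defensive.
Import GRing.Theory.
Local Open Scope ring_scope.

Section Coalgebra.
Variables (k : fieldType) (C : lmodType k).

Definition bilin (M : lmodType k) (b : C -> C -> M) : Prop :=
  (forall a x y z, b (a *: x + y) z = a *: b x z + b y z) /\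
  (forall a x y z, b z (a *: x + y) = a *: b z x + b z y).

Definition trilin (M : lmodType k) (t : C -> C -> C -> M) : Prop :=
  (forall a x y u v, t (a *: x + y) u v = a *: t x u v + t y u v) /\
  (forall a x y u v, t u (a *: x + y) v = a *: t u x v + t u y v) /\
  (forall a x y u v, t u v (a *: x + y) = a *: t u v x + t u v y).

(* the image of the formal sum  sum_i x_i (x) y_i  under the linear map
   C (x) C -> M induced by the bilinear map b *)
Definition teval (M : lmodType k) (b : C -> C -> M) (s : seq (C * C)) : M :=
  \sum_(p <- s) b p.1 p.2.

Definition subspace (D : C -> Prop) : Prop :=
  D 0 /\ forall a x y, D x -> D y -> D (a *: x + y).

Variables (Delta : C -> seq (C * C)) (eps : C -> k).

Definition is_coalgebra : Prop :=
  (* Delta : C -> C (x) C is linear *)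
  (forall (M : lmodType k) (b : C -> C -> M), bilin b ->
     forall a x y, teval b (Delta (a *: x + y))
                   = a *: teval b (Delta x) + teval b (Delta y)) /\
  (forall a x y, eps (a *: x + y) = a * eps x + eps y) /\
  (* coassociativity: (Delta (x) id) Delta = (id (x) Delta) Delta in C(x)C(x)C *)
  (forall (M : lmodType k) (t : C -> C -> C -> M), trilin t ->
     forall c, \sum_(p <- Delta c) \sum_(q <- Delta p.1) t q.1 q.2 p.2
             = \sum_(p <- Delta c) \sum_(q <- Delta p.2) t p.1 q.1 q.2) /\
  (forall c, \sum_(p <- Delta c) eps p.1 *: p.2 = c) /\
  (forall c, \sum_(p <- Delta c) eps p.2 *: p.1 = c).

(* s lies in the subspace X (x) Y of C (x) C *)
Definition tensor_in (X Y : C -> Prop) (s : seq (C * C)) : Prop :=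
  forall (M : lmodType k) (b : C -> C -> M), bilin b ->
    (forall x y, X x -> Y y -> b x y = 0) -> teval b s = 0.

Definition subcoalgebra (D : C -> Prop) : Prop :=
  subspace D /\ forall d, D d -> tensor_in D D (Delta d).

(* wedge:  X /\ Y = Delta^{-1}(X (x) C + C (x) Y) *)
Definition wedge (X Y : C -> Prop) (c : C) : Prop :=
  forall (M : lmodType k) (b : C -> C -> M), bilin b ->
    (forall x y, X x -> b x y = 0) -> (forall x y, Y y -> b x y = 0) ->
    teval b (Delta c) = 0.

Definition simple_subcoalgebra (D : C -> Prop) : Prop :=
  subcoalgebra D /\ (exists d, D d /\ d <> 0) /\
  forall E, subcoalgebra E -> (forall x, E x -> D x) ->
    (forall x, E x -> x = 0) \/ (forall x, D x -> E x).

Definition coradical (c : C) : Prop :=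
  exists s : seq C,
    (forall x, x \in s -> exists D, simple_subcoalgebra D /\ D x) /\
    c = \sum_(x <- s) x.

Fixpoint corad_filt (n : nat) : C -> Prop :=
  match n with
  | 0 => coradical
  | n'.+1 => wedge (corad_filt n') coradical
  end.

Definition semiprime : Prop :=
  forall D, subcoalgebra D -> (forall c, wedge D D c) -> forall c, D c.

Definition cosemisimple : Prop := forall c, coradical c.

End Coalgebra.

From HB Require Import structures.
From mathcomp Require Import all_boot all_order all_algebra.
From mathcomp Require Import boolp classical_sets.

(* If C = C_(n+1), then C_n is a subcoalgebra with C_n /\ C_n containing
   C_n /\ C_0 = C_(n+1) = C, so semiprimeness forces C_n = C; descending, C = C_0.
   The substantial point is that the wedge X /\ Y of two subcoalgebras is again a
   subcoalgebra.  Write Delta w = sum_i a_i (x) b_i with as few terms as possible: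
   then each b_i lies outside the span of the other b_j, so a functional g with
   g(b_j) = delta_ij exists (Zorn's lemma) and a_i = (id (x) g) Delta w.
   Coassociativity shows that X /\ Y is stable under id (x) g, hence contains
   every a_i; the b_i are handled by the same argument in the co-opposite coalgebra. *)

Set Implicit Arguments. Unset Strict Implicit. Unset Printing Implicit Defensive.
Import GRing.Theory.
Local Open Scope ring_scope.

Section Tensors.
Variables (k : fieldType) (C : lmodType k).
Implicit Types (M : lmodType k) (s : seq (C * C)).

Lemma bilin_flip M (b : C -> C -> M) : bilin b -> bilin (fun x y => b y x).
Proof. by case. Qed.

Lemma bilin0l M (b : C -> C -> M) z : bilin b -> b 0 z = 0.
Proof.
case=> + _; move/(_ 1 0 0 z); rewrite scaler0 scale1r addr0.
by move/(congr1 (fun v => v - b 0 z)); rewrite subrr addrK.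
Qed.

Lemma bilinDl M (b : C -> C -> M) x y z : bilin b -> b (x + y) z = b x z + b y z.
Proof. by case=> hl _; rewrite -{1}[x]scale1r hl scale1r. Qed.

Lemma bilinZl M (b : C -> C -> M) a x z : bilin b -> b (a *: x) z = a *: b x z.
Proof. by move=> hb; rewrite -[a *: x]addr0 hb.1 bilin0l // addr0. Qed.

Lemma bilin0r M (b : C -> C -> M) z : bilin b -> b z 0 = 0.
Proof. by move/bilin_flip/bilin0l. Qed.

Lemma bilinDr M (b : C -> C -> M) x y z : bilin b -> b z (x + y) = b z x + b z y.
Proof. by move/bilin_flip/bilinDl. Qed.

Lemma bilinZr M (b : C -> C -> M) a x z : bilin b -> b z (a *: x) = a *: b z x.
Proof. by move/bilin_flip/bilinZl. Qed.

Lemma teval_cons M (b : C -> C -> M) p s : teval b (p :: s) = b p.1 p.2 + teval b s.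
Proof. exact: big_cons. Qed.

Lemma teval_cat M (b : C -> C -> M) s1 s2 :
  teval b (s1 ++ s2) = teval b s1 + teval b s2.
Proof. exact: big_cat. Qed.

Definition tensor_eq s s' := forall M (b : C -> C -> M), bilin b -> teval b s = teval b s'.

Definition tflip s := [seq (p.2, p.1) | p <- s].

Lemma teval_tflip M (b : C -> C -> M) s : teval b (tflip s) = teval (fun x y => b y x) s.
Proof. exact: big_map. Qed.

Lemma tflipK : involutive tflip.
Proof. by move=> s; rewrite /tflip -map_comp map_id_in // => -[]. Qed.

Lemma tensor_in_tflip (X Y : C -> Prop) s : tensor_in X Y s -> tensor_in Y X (tflip s).
Proof.
by move=> hs M b /bilin_flip hb hXY; rewrite teval_tflip hs // => x y /[swap]; apply: hXY.
Qed.

Lemma tensor_eq_tflip s s' : tensor_eq s s' -> tensor_eq (tflip s) (tflip s').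
Proof. by move=> e M b /bilin_flip hb; rewrite !teval_tflip e. Qed.

Fixpoint lspan (l : seq C) : C -> Prop :=
  if l is y :: l' then fun x => exists c z, lspan l' z /\ x = c *: y + z
  else fun x => x = 0.

Lemma lspan_subspace l : subspace (lspan l).
Proof.
elim: l => [|y l [IH0 IH]] /=; first by split=> // a x y -> ->; rewrite scaler0 addr0.
split; first by exists 0, 0; rewrite scale0r addr0.
move=> a _ _ [c1 [z1 [h1 ->]]] [c2 [z2 [h2 ->]]].
exists (a * c1 + c2), (a *: z1 + z2); split; first exact: IH.
by rewrite scalerDr scalerA scalerDl addrACA.
Qed.

Lemma lspan_mem l x : x \in l -> lspan l x.
Proof.
elim: l => [|y l IH] //; rewrite inE => /predU1P [->|/IH hx] /=.
  by exists 1, 0; split; [case: (lspan_subspace l)|rewrite scale1r addr0].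
by exists 0, x; rewrite scale0r add0r.
Qed.

Lemma tensor_eq_absorb_snd (r : seq (C * C)) x y : lspan (map snd r) y ->
  exists r', size r' = size r /\ tensor_eq ((x, y) :: r) r'.
Proof.
elim: r y => [|[u v] r IH] y /=.
  by move=> ->; exists [::]; split=> // M b hb; rewrite teval_cons /= bilin0r // add0r.
move=> [c [z [hz ->]]]; have [r' [hs he]] := IH z hz.
exists ((u + c *: x, v) :: r'); split; first by rewrite /= hs.
move=> M b hb; rewrite !teval_cons -he // teval_cons /=.
rewrite bilinDr // bilinDl // bilinZl // bilinZr //.
by rewrite addrACA [b u v + _]addrC.
Qed.

Definition minimal_rep s s' :=
  tensor_eq s s' /\ forall s'', tensor_eq s s'' -> (size s' <= size s'')%N.

Lemma exists_minimal_rep s : exists s', minimal_rep s s'.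
Proof.
have /ex_minnP [n /asboolP [s' [hs' <-]] hmin] :
    exists n, `[< exists s', tensor_eq s s' /\ size s' = n >].
  by exists (size s); apply/asboolP; exists s.
by exists s'; split=> // s'' hs''; apply/hmin/asboolP; exists s''.
Qed.

Lemma minimal_rep_tflip s s' : minimal_rep s s' -> minimal_rep (tflip s) (tflip s').
Proof.
move=> [e hmin]; split; first exact: tensor_eq_tflip.
move=> s'' /tensor_eq_tflip; rewrite size_map -(size_map (fun p => (p.2, p.1)) s'').
by rewrite tflipK; apply: hmin.
Qed.

Lemma minimal_rep_snd_free s s1 p s2 : minimal_rep s (s1 ++ p :: s2) ->
  ~ lspan (map snd (s1 ++ s2)) p.2.
Proof.
move=> [e hmin] /(tensor_eq_absorb_snd p.1) [r' [hs he]].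
suff : (size (s1 ++ p :: s2) <= size r')%N by rewrite hs !size_cat /= addnS ltnn.
apply: hmin => M b hb; rewrite e // -he // teval_cons !teval_cat teval_cons.
by rewrite addrCA -surjective_pairing.
Qed.

End Tensors.

Section Functionals.
Variables (k : fieldType) (C : lmodType k).

Lemma subspaceD (S : C -> Prop) x y : subspace S -> S x -> S y -> S (x + y).
Proof. by case=> _ hS hx hy; rewrite -[x]scale1r; apply: hS. Qed.

Lemma subspaceZ (S : C -> Prop) a x : subspace S -> S x -> S (a *: x).
Proof. by case=> h0 hS hx; rewrite -[_ *: _]addr0; apply: hS. Qed.

Section Avoiding.
Variables (S : C -> Prop) (a : C).
Hypotheses (subS : subspace S) (Sna : ~ S a).

Definition avoids (T : C -> Prop) := [/\ subspace T, ~ T a & forall x, S x -> T x].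

Lemma exists_maximal_avoiding : exists T, avoids T /\
  forall T', avoids T' -> (forall x, T x -> T' x) -> forall x, T' x -> T x.
Proof.
(* Zorn's lemma is applied to the sets A such that A `|` S avoids a, so that the
   empty chain causes no trouble. *)
have [A [QA Amax]] : exists A, avoids (A `|` S)%classic /\
    forall B, (A `<` B)%classic -> ~ avoids (B `|` S)%classic.
  apply: Zorn_bigcup => F QF Ftot.
  pose U := ((\bigcup_(X in F) X) `|` S)%classic.
  pose G B := F B \/ B = set0.
  have GQ B : G B -> avoids (B `|` S)%classic.
    by case=> [/QF //|->]; rewrite set0U.
  have GU B : G B -> forall z, (B `|` S)%classic z -> U z.
    move=> [FB|->] z [Bz|Sz]; [by left; exists B|by right|by []|by right].
  have memU z : U z -> exists2 B, G B & (B `|` S)%classic z.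
    by case=> [[X FX Xz]|Sz]; [exists X; [left|left]|exists set0; [right|right]].
  have memU2 x y : U x -> U y ->
      exists2 B, G B & (B `|` S)%classic x /\ (B `|` S)%classic y.
    move=> /memU [B1 G1 x1] /memU [B2 G2 y2].
    have [B12|B21] : (B1 `<=` B2 \/ B2 `<=` B1)%classic.
      by case: G1 G2 => [F1|->] [F2|->]; [exact: Ftot|right|left|left].
    - by exists B2 => //; split=> //; case: x1 => [/B12|]; [left|right].
    - by exists B1 => //; split=> //; case: y2 => [/B21|]; [left|right].
  split.
  - split; first by right; case: subS.
    move=> c x y /memU2 /[apply] -[B GB [Bx By]].
    by have [[_ QB] _ _] := GQ B GB; apply/(GU B GB)/QB.
  - by move=> /memU [B /GQ [_ QBa _] /QBa].
  - by move=> x Sx; right.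
exists (A `|` S)%classic; split=> // T' hT' AST' x T'x.
have [_ _ ST'] := hT'.
have [//|nx] := pselect ((A `|` S)%classic x).
case: (Amax T'); last by rewrite setUidl.
split=> [y Ay|T'A]; first by apply: AST'; left.
by apply: nx; left; apply: T'A.
Qed.

Lemma maximal_avoiding_decomp T : avoids T ->
    (forall T', avoids T' -> (forall x, T x -> T' x) -> forall x, T' x -> T x) ->
  forall v, exists c t, T t /\ v = t + c *: a.
Proof.
move=> [subT Tna ST] Tmax v.
have [Tv|Tnv] := pselect (T v); first by exists 0, v; rewrite scale0r addr0.
pose T' x := exists t c, T t /\ x = t + c *: v.
have subT' : subspace T'.
  split; first by exists 0, 0; rewrite scale0r addr0; split=> //; case: subT.
  move=> c _ _ [t1 [c1 [h1 ->]]] [t2 [c2 [h2 ->]]].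
  exists (c *: t1 + t2), (c * c1 + c2); split; first by case: subT => _; apply.
  by rewrite scalerDr scalerA scalerDl addrACA.
have TT' x : T x -> T' x by exists x, 0; rewrite scale0r addr0.
have [t [c [Tt ea]]] : T' a.
  apply: contra_notP Tnv => T'na; apply: (Tmax T') => //; last first.
    by exists 0, 1; rewrite scale1r add0r; split=> //; case: subT.
  by split=> // x /ST /TT'.
have c0 : c != 0 by apply: contraPneq Tna => c0; rewrite ea c0 scale0r addr0.
exists c^-1, ((- c^-1) *: t); split; first exact: subspaceZ.
by rewrite ea scalerDr scalerA mulVf // scale1r scaleNr addKr.
Qed.

Lemma exists_functional :
  exists f : C -> k, [/\ scalar f, f a = 1 & forall x, S x -> f x = 0].
Proof.
have [T [[subT Tna ST] Tmax]] := exists_maximal_avoiding.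
have /choice [f hf] := maximal_avoiding_decomp (And3 subT Tna ST) Tmax.
have f_unique v c t : T t -> v = t + c *: a -> f v = c.
  move=> Tt ev; have [t' [Tt' ev']] := hf v; apply: contra_notP Tna => /eqP ne.
  have d0 : f v - c != 0 by rewrite subr_eq0.
  have -> : a = (f v - c)^-1 *: (t - t').
    apply: (scalerI d0); rewrite scalerA divff // scale1r scalerBl.
    by apply: (addrI t'); rewrite addrA -ev' ev addrK addrC subrK.
  by apply: subspaceZ => //; apply: subspaceD => //; rewrite -scaleN1r; apply: subspaceZ.
exists f; split.
- move=> c x y; have [tx [Tx ex]] := hf x; have [ty [Ty ey]] := hf y.
  apply: (f_unique _ _ (c *: tx + ty)); first by case: subT => _; apply.
  by rewrite {1}ex {1}ey scalerDr scalerA scalerDl addrACA.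
- by apply: (f_unique _ _ 0); [case: subT|rewrite add0r scale1r].
- by move=> x Sx; apply: (f_unique _ _ x); [apply: ST|rewrite scale0r addr0].
Qed.

End Avoiding.
End Functionals.

Section Contraction.
Variables (k : fieldType) (C : lmodType k).

Definition contract_snd (g : C -> k) (s : seq (C * C)) : C := teval (fun u v => g v *: u) s.

Lemma bilin_scaler (M : lmodType k) (g : C -> k) (h : C -> M) :
  scalar g -> linear h -> bilin (fun x y => g y *: h x).
Proof.
move=> hg hh; split=> a x y z; first by rewrite hh scalerDr !scalerA mulrC.
by rewrite hg scalerDl scalerA.
Qed.

Lemma minimal_rep_contract_snd s s1 p s2 : minimal_rep s (s1 ++ p :: s2) ->
  exists2 g, scalar g & contract_snd g s = p.1.
Proof.
move=> hmin.
have [g [hg g1 g0]] := exists_functional (lspan_subspace _) (minimal_rep_snd_free hmin).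
exists g => //; rewrite /contract_snd hmin.1; last exact: bilin_scaler.
have gq0 q : q \in s1 ++ s2 -> g q.2 *: q.1 = 0.
  by move=> hq; rewrite g0 ?scale0r //; apply/lspan_mem/map_f.
rewrite teval_cat teval_cons g1 scale1r /teval !big1_seq ?add0r ?addr0 //.
all: by move=> q /andP [_ hq]; apply: gq0; rewrite mem_cat hq ?orbT.
Qed.

End Contraction.

Section CoOpposite.
Variables (k : fieldType) (C : lmodType k).
Implicit Types (Delta : C -> seq (C * C)) (X Y : C -> Prop).

Definition comul_linear Delta := forall (M : lmodType k) (b : C -> C -> M), bilin b ->
  forall a x y, teval b (Delta (a *: x + y)) = a *: teval b (Delta x) + teval b (Delta y).

Definition coassociative Delta := forall (M : lmodType k) (t : C -> C -> C -> M), trilin t ->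
  forall c, \sum_(p <- Delta c) \sum_(q <- Delta p.1) t q.1 q.2 p.2
          = \sum_(p <- Delta c) \sum_(q <- Delta p.2) t p.1 q.1 q.2.

Definition cop Delta c := tflip (Delta c).

Lemma copK : involutive cop.
Proof. by move=> Delta; apply: funext => c; rewrite /cop tflipK. Qed.

Lemma trilin_rev (M : lmodType k) (t : C -> C -> C -> M) :
  trilin t -> trilin (fun x y z => t z y x).
Proof. by case=> h1 [h2 h3]; split; [|split] => *; [apply: h3|apply: h2|apply: h1]. Qed.

Lemma comul_linear_cop Delta : comul_linear Delta -> comul_linear (cop Delta).
Proof. by move=> hD M b /bilin_flip hb a x y; rewrite /cop !teval_tflip hD. Qed.

Lemma coassociative_cop Delta : coassociative Delta -> coassociative (cop Delta).
Proof.
move=> hD M t /trilin_rev ht c; rewrite /cop /tflip !big_map /=.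
under eq_bigr do rewrite big_map.
under [RHS]eq_bigr do rewrite big_map.
by symmetry; apply: (hD M _ ht c).
Qed.

Lemma wedge_cop Delta X Y c : wedge Delta X Y c -> wedge (cop Delta) Y X c.
Proof.
move=> hw M b /bilin_flip hb hY hX; rewrite /cop teval_tflip.
by apply: hw => // x y; [apply: hX|apply: hY].
Qed.

Lemma subcoalgebra_cop Delta X : subcoalgebra Delta X -> subcoalgebra (cop Delta) X.
Proof. by case=> sX hX; split=> // x /hX; apply: tensor_in_tflip. Qed.

End CoOpposite.

Section Coassociative.
Variables (k : fieldType) (C : lmodType k) (Delta : C -> seq (C * C)).
Hypotheses (Delta_linear : comul_linear Delta) (Delta_coassoc : coassociative Delta).

Lemma Delta0 (M : lmodType k) (b : C -> C -> M) : bilin b -> teval b (Delta 0) = 0.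
Proof.
move/Delta_linear/(_ 1 0 0); rewrite scaler0 scale1r addr0.
by move/(congr1 (fun v => v - teval b (Delta 0))); rewrite subrr addrK.
Qed.

Lemma DeltaZ (M : lmodType k) (b : C -> C -> M) a x : bilin b ->
  teval b (Delta (a *: x)) = a *: teval b (Delta x).
Proof. by move=> hb; rewrite -[a *: x]addr0 Delta_linear // Delta0 // addr0. Qed.

Lemma Delta_sum (M : lmodType k) (b : C -> C -> M) (I : Type) (r : seq I) (F : I -> C) :
  bilin b -> teval b (Delta (\sum_(i <- r) F i)) = \sum_(i <- r) teval b (Delta (F i)).
Proof.
move=> hb; apply: (big_morph (fun x => teval b (Delta x))) => [x y|]; last exact: Delta0.
by rewrite -[x]scale1r Delta_linear // !scale1r.
Qed.

Lemma wedge_subspace X Y : subspace (wedge Delta X Y).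
Proof.
split=> [M b hb _ _|a x y hx hy M b hb hX hY]; first exact: Delta0.
by rewrite Delta_linear // hx // hy // scaler0 addr0.
Qed.

Lemma wedge_contract_snd X Y g w : subcoalgebra Delta Y -> scalar g ->
  wedge Delta X Y w -> wedge Delta X Y (contract_snd g (Delta w)).
Proof.
move=> [_ hY] hg hw M be hbe hXbe hYbe.
pose t x y z := g z *: be x y.
have ht : trilin t.
  split; [|split] => a x y u v; rewrite /t; last by rewrite hg scalerDl scalerA.
    by rewrite hbe.1 scalerDr !scalerA mulrC.
  by rewrite hbe.2 scalerDr !scalerA mulrC.
have bet u : bilin (fun q1 q2 => g q2 *: be u q1).
  exact: (bilin_scaler hg (fun a x y => hbe.2 a x y u)).
(* By coassociativity, be applied to Delta ((id (x) g) Delta w) is a bilinear map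
   evaluated on Delta w, which vanishes on X (x) C and, Y being a subcoalgebra,
   on C (x) Y. *)
transitivity (\sum_(p <- Delta w) \sum_(q <- Delta p.1) t q.1 q.2 p.2).
  rewrite /contract_snd [X in Delta X]/teval Delta_sum //; apply: eq_bigr => p _.
  by rewrite DeltaZ // /teval scaler_sumr.
rewrite Delta_coassoc //.
apply: (hw _ (fun u v => teval (t u) (Delta v))).
- split=> a x y z; last exact: (Delta_linear (bet z)).
  by rewrite /teval scaler_sumr -big_split; apply: eq_bigr => q _; rewrite ht.1.
- by move=> x y Xx; apply: big1 => q _; rewrite /t hXbe // scaler0.
- by move=> x y Yy; apply: (hY y Yy _ _ (bet x)) => q1 q2 Yq1 _; rewrite hYbe // scaler0.
Qed.

Lemma minimal_rep_wedge_fst X Y w s' p : subcoalgebra Delta Y ->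
  wedge Delta X Y w -> minimal_rep (Delta w) s' -> p \in s' -> wedge Delta X Y p.1.
Proof.
move=> hY hw hmin hp; case/splitPr: hp hmin => s1 s2 hmin.
have [g hg <-] := minimal_rep_contract_snd hmin.
exact: wedge_contract_snd.
Qed.

End Coassociative.

Section CoalgebraTheory.
Variables (k : fieldType) (C : lmodType k) (Delta : C -> seq (C * C)).
Hypotheses (Delta_linear : comul_linear Delta) (Delta_coassoc : coassociative Delta).

Lemma wedge_subcoalgebra X Y : subcoalgebra Delta X -> subcoalgebra Delta Y ->
  subcoalgebra Delta (wedge Delta X Y).
Proof.
move=> hX hY; split=> [|w hw]; first exact: wedge_subspace.
have [s' hmin] := exists_minimal_rep (Delta w).
have wedge_fst p : p \in s' -> wedge Delta X Y p.1.
  exact: minimal_rep_wedge_fst hY hw hmin.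
have wedge_snd p : p \in s' -> wedge Delta X Y p.2.
  move=> hp; rewrite -[Delta]copK; apply: wedge_cop.
  apply: (minimal_rep_wedge_fst (p := (p.2, p.1)) (comul_linear_cop Delta_linear)
    (coassociative_cop Delta_coassoc) (subcoalgebra_cop hX) (wedge_cop hw)
    (minimal_rep_tflip hmin)).
  exact: (map_f (fun p => (p.2, p.1))).
move=> M b hb hW; rewrite hmin.1 //; apply: big1_seq => p /andP [_ hp].
by apply: hW; [apply: wedge_fst|apply: wedge_snd].
Qed.

Lemma simple_sub_coradical D x :
  simple_subcoalgebra Delta D -> D x -> coradical Delta x.
Proof.
move=> hD Dx; exists [:: x]; split; last by rewrite big_seq1.
by move=> y; rewrite inE => /eqP ->; exists D.
Qed.

Lemma coradical_subspace : subspace (coradical Delta).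
Proof.
split; first by exists [::]; rewrite big_nil.
move=> a _ _ [sx [hx ->]] [sy [hy ->]].
exists (map ( *:%R a) sx ++ sy); split; last by rewrite big_cat big_map scaler_sumr.
move=> z; rewrite mem_cat => /orP [/mapP [x sx_x ->]|]; last exact: hy.
have [D [hD Dx]] := hx x sx_x; have [[subD _] _] := hD.
by exists D; split=> //; apply: subspaceZ.
Qed.

Lemma coradical_subcoalgebra : subcoalgebra Delta (coradical Delta).
Proof.
split=> [|_ [s [hs ->]] M b hb hC0]; first exact: coradical_subspace.
rewrite Delta_sum //; apply: big1_seq => x /andP [_ /hs [D [hD Dx]]].
have [[_ subD] _] := hD.
by apply: (subD x Dx) => // u v Du Dv; apply: hC0; apply: simple_sub_coradical hD _.
Qed.

Lemma subcoalgebra_sub_wedge X Y x : subcoalgebra Delta X -> X x -> wedge Delta X Y x.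
Proof. by move=> [_ hX] Xx M b hb hXb _; apply: (hX x Xx) => // u v Xu _; apply: hXb. Qed.

Lemma wedgeSr X Y Y' c : (forall y, Y y -> Y' y) -> wedge Delta X Y c -> wedge Delta X Y' c.
Proof. by move=> YY' hw M b hb hX hY'; apply: hw => // x y /YY'; apply: hY'. Qed.

Lemma corad_filt_subcoalgebra n : subcoalgebra Delta (corad_filt Delta n).
Proof.
elim: n => [|n IH] /=; first exact: coradical_subcoalgebra.
exact: wedge_subcoalgebra IH coradical_subcoalgebra.
Qed.

Lemma coradical_sub_corad_filt n x : coradical Delta x -> corad_filt Delta n x.
Proof.
elim: n => [//|n IH] /= C0x.
exact/subcoalgebra_sub_wedge/IH/C0x/corad_filt_subcoalgebra.
Qed.

Lemma semiprime_corad_filt_full n : semiprime Delta ->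
  (forall c, corad_filt Delta n.+1 c) -> forall c, corad_filt Delta n c.
Proof.
move=> hsp full; apply: hsp (corad_filt_subcoalgebra n) _ => c.
exact/(wedgeSr (coradical_sub_corad_filt n))/full.
Qed.

End CoalgebraTheory.

Theorem mainTheorem12 (k : fieldType) (C : lmodType k)
  (Delta : C -> seq (C * C)) (eps : C -> k) :
  is_coalgebra Delta eps ->
  semiprime Delta ->
  (exists n : nat, forall c : C, corad_filt Delta n c) ->
  cosemisimple Delta.
Proof.
move=> [Delta_linear [_ [Delta_coassoc _]]] hsp [n].
elim: n => [//|n IH] full; apply: IH.
exact: semiprime_corad_filt_full.
Qed.
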